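(* Let $M^\star\in\mathbb{R}^{m\times n}$, $k=\min(m,n)$, and let $M^\star=P\Sigma Q^\top$ be a singular value decomposition with $P\in\mathbb{R}^{m\times k}$, $Q\in\mathbb{R}^{n\times k}$ having orthonormal columns and $\Sigma=\mathrm{diag}(\sigma_1,\dots,\sigma_k)$, $\sigma_i\ge0$. Consider, for $W\in\mathbb{R}^{m\times n}$, $$\Phi(W)=\frac14\|W-2M^\star\|_F^2+\frac1{4k}\|W\|_\star^2.$$ Then $\Phi$ admits a unique global minimizer $W^\star$. Moreover, there exists a minimizer whose left and right singular subspaces coincide with those of $M^\star$, and such a minimizer can be written as $W^\star=P\,\mathrm{diag}(w_1,\dots,w_k)\,Q^\top$, where the $w_i\ge0$ are uniquely determined by $$w_i=\max(0,\,2\sigma_i-\lambda),\quad i=1,\dots,k,\qquad\text{with}\qquad \lambda=\frac1k\sum_{j=1}^kw_j.$$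
   Context: $\|\cdot\|_F$ is the Frobenius norm and $\|\cdot\|_\star$ the nuclear norm (sum of singular values). *)

From mathcomp Require Import all_boot all_order all_algebra.
From mathcomp Require Import reals.
From Stdlib Require Import ClassicalEpsilon.
Set Implicit Arguments. Unset Strict Implicit. Unset Printing Implicit Defensive.
Import Order.TTheory GRing.Theory Num.Theory.
Local Open Scope ring_scope.

Section Defs.
Variable R : realType.

Definition frob2 m n (A : 'M[R]_(m, n)) : R := \sum_i \sum_j (A i j) ^+ 2.

Definition is_svd m n (W : 'M[R]_(m, n)) (U : 'M[R]_(m, minn m n))
  (s : 'rV[R]_(minn m n)) (V : 'M[R]_(n, minn m n)) : Prop :=
  [/\ U^T *m U = 1%:M, V^T *m V = 1%:M, (forall i, 0 <= s 0 i)
    & W = U *m diag_mx s *m V^T].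

Definition sing_vals m n (W : 'M[R]_(m, n)) : 'rV[R]_(minn m n) :=
  epsilon (inhabits 0) (fun s => exists U V, is_svd W U s V).

Definition nucnorm m n (W : 'M[R]_(m, n)) : R := \sum_i sing_vals W 0 i.

Definition Phi m n (M W : 'M[R]_(m, n)) : R :=
  4^-1 * frob2 (W - 2 *: M) + ((4 * (minn m n)%:R)^-1) * (nucnorm W) ^+ 2.

Definition wfix k (sigma w : 'rV[R]_k) : Prop :=
  (forall i, 0 <= w 0 i) /\
  (forall i, w 0 i = Num.max 0 (2 * sigma 0 i - (k%:R)^-1 * \sum_j w 0 j)).

End Defs.

(* Let w be the fixed point, lambda = (1/k) sum_j w_j, W = P diag(w) Q^T and
   G = P diag(g) Q^T with g_i = min(2 sigma_i, lambda) / lambda (g = 1 when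
   lambda = 0).  Then W + lambda G = 2 M*, <G, W>_F = |W|_*, and
   <G, V>_F <= |V|_* for every V by Bessel's inequality applied to a singular
   value decomposition of V.  Expanding the square in Phi with these facts gives
   Phi(V) >= Phi(W) + |V - W|_F^2 / 4, so W is the unique minimiser.
   Singular value decompositions exist: a top singular pair comes from an
   eigenvector of V^T V (spectral theorem over the complex numbers), and two
   Householder reflections split it off. *)

From mathcomp Require Import all_boot all_order all_algebra.
From mathcomp Require Import reals complex.
From mathcomp Require Import ring lra.
From Stdlib Require Import ClassicalEpsilon.
Import Order.TTheory GRing.Theory Num.Theory.
Set Implicit Arguments. Unset Strict Implicit. Unset Printing Implicit Defensive.
Local Open Scope ring_scope.

Section FrobeniusProduct.
Variable R : realFieldType.

Definition frobdot m n (A B : 'M[R]_(m, n)) : R := \tr (A^T *m B).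

Lemma frobdotE m n (A B : 'M[R]_(m, n)) :
  frobdot A B = \sum_i \sum_j A i j * B i j.
Proof.
rewrite /frobdot /mxtrace exchange_big /=; apply: eq_bigr => j _.
by rewrite mxE; apply: eq_bigr => i _; rewrite mxE.
Qed.

Lemma frobdotC m n (A B : 'M[R]_(m, n)) : frobdot A B = frobdot B A.
Proof. by rewrite /frobdot -mxtrace_tr trmx_mul trmxK. Qed.

Lemma frobdotBr m n (A B C : 'M[R]_(m, n)) :
  frobdot A (B - C) = frobdot A B - frobdot A C.
Proof. by rewrite /frobdot mulmxBr raddfB. Qed.

Lemma frobdot0r m n (A : 'M[R]_(m, n)) : frobdot A 0 = 0.
Proof. by rewrite /frobdot mulmx0 mxtrace0. Qed.

Lemma frobdot_subZ m n (A B : 'M[R]_(m, n)) c :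
  frobdot (A - c *: B) (A - c *: B) =
  frobdot A A - 2 * c * frobdot B A + c ^+ 2 * frobdot B B.
Proof.
rewrite /frobdot [(_ - _)^T]linearB /= [(_ *: B)^T]linearZ /= mulmxBl !mulmxBr.
rewrite -!scalemxAl -!scalemxAr !raddfB /= !mxtraceZ.
rewrite -[\tr (A^T *m B)]/(frobdot A B) frobdotC /frobdot; ring.
Qed.

Lemma frobdot_self_ge0 m n (A : 'M[R]_(m, n)) : 0 <= frobdot A A.
Proof.
by rewrite frobdotE; do 2!apply: sumr_ge0 => ? _; rewrite -expr2 sqr_ge0.
Qed.

Lemma frobdot_self_eq0 m n (A : 'M[R]_(m, n)) : frobdot A A = 0 -> A = 0.
Proof.
rewrite frobdotE => /eqP; rewrite psumr_eq0 => [/allP A0|i _]; last first.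
  by apply: sumr_ge0 => j _; rewrite -expr2 sqr_ge0.
apply/matrixP => i j; have /A0 /= := mem_index_enum i.
rewrite psumr_eq0 => [/allP Ai0|l _]; last by rewrite -expr2 sqr_ge0.
by have /Ai0 /= := mem_index_enum j; rewrite mulf_eq0 orbb mxE => /eqP.
Qed.

Lemma trmx_mul_cV n (u v : 'cV[R]_n) : u^T *m v = (frobdot u v)%:M.
Proof. by rewrite {1}[u^T *m v]mx11_scalar /frobdot /mxtrace big_ord1. Qed.

Lemma frobdot_cVE n (u v : 'cV[R]_n) : frobdot u v = (u^T *m v) 0 0.
Proof. by rewrite trmx_mul_cV mxE eqxx mulr1n. Qed.

Lemma bessel p k l (X : 'M[R]_(p, k)) (U : 'M[R]_(p, l)) :
  X^T *m X = 1%:M -> U^T *m U = 1%:M ->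
  forall j, \sum_i (X^T *m U) i j ^+ 2 <= 1.
Proof.
move=> XX UU j; set A := X^T *m U.
have UX : U^T *m X = A^T by rewrite trmx_mul trmxK.
have EE : (U - X *m A)^T *m (U - X *m A) = 1%:M - A^T *m A.
  rewrite [(_ - _)^T]linearB /= !mulmxBl !mulmxBr trmx_mul UU mulmxA UX.
  by rewrite -!mulmxA -/A (mulmxA X^T) XX mul1mx subrr subr0.
have : 0 <= ((U - X *m A)^T *m (U - X *m A)) j j.
  by rewrite mxE; apply: sumr_ge0 => i _; rewrite mxE -expr2 sqr_ge0.
rewrite EE !mxE eqxx mulr1n subr_ge0.
by congr (_ <= _); apply: eq_bigr => i _; rewrite mxE expr2.
Qed.

Lemma frobdot_diag_le_sum m n k l (X : 'M[R]_(m, k)) (Y : 'M[R]_(n, k))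
    (g : 'rV[R]_k) (U : 'M[R]_(m, l)) (Z : 'M[R]_(n, l)) (s : 'rV[R]_l) :
  X^T *m X = 1%:M -> Y^T *m Y = 1%:M -> (forall i, 0 <= g 0 i <= 1) ->
  U^T *m U = 1%:M -> Z^T *m Z = 1%:M -> (forall j, 0 <= s 0 j) ->
  frobdot (X *m diag_mx g *m Y^T) (U *m diag_mx s *m Z^T) <= \sum_j s 0 j.
Proof.
move=> XX YY g01 UU ZZ s0.
set A := X^T *m U; set B := Y^T *m Z.
have -> : frobdot (X *m diag_mx g *m Y^T) (U *m diag_mx s *m Z^T) =
    \sum_j (\sum_i g 0 i * (A i j * B i j)) * s 0 j.
  have ZY : Z^T *m Y = B^T by rewrite trmx_mul trmxK.
  rewrite /frobdot !trmx_mul trmxK tr_diag_mx -!mulmxA mxtrace_mulC !mulmxA.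
  rewrite -(mulmxA _ X^T U) -/A -(mulmxA _ Z^T) ZY /mxtrace.
  under eq_bigr do rewrite mxE; rewrite exchange_big /=.
  apply: eq_bigr => j _; rewrite mulr_suml; apply: eq_bigr => i _.
  by rewrite mul_mx_diag mul_diag_mx !mxE; ring.
apply: ler_sum => j _; rewrite -[leRHS]mul1r; apply: ler_wpM2r => //.
have am_gm i : g 0 i * (A i j * B i j) <= (A i j ^+ 2 + B i j ^+ 2) / 2.
  have /andP [g0 g1] := g01 i.
  have : 0 <= (1 - g 0 i ^+ 2) * B i j ^+ 2.
    by rewrite mulr_ge0 ?sqr_ge0 ?subr_ge0 ?expr_le1.
  have : 0 <= (A i j - g 0 i * B i j) ^+ 2 by apply: sqr_ge0.
  nra.
apply: le_trans (ler_sum _ (fun i _ => am_gm i)) _.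
rewrite -mulr_suml big_split /= ler_pdivrMr // mul1r.
by apply: lerD; [apply: bessel | rewrite /B; apply: bessel].
Qed.

Lemma frobdot_diag m n k (P : 'M[R]_(m, k)) (Q : 'M[R]_(n, k)) (a b : 'rV[R]_k) :
  P^T *m P = 1%:M -> Q^T *m Q = 1%:M ->
  frobdot (P *m diag_mx a *m Q^T) (P *m diag_mx b *m Q^T) = \sum_i a 0 i * b 0 i.
Proof.
move=> PP QQ; rewrite /frobdot !trmx_mul trmxK tr_diag_mx -!mulmxA (mulmxA P^T) PP.
rewrite mul1mx mxtrace_mulC -!mulmxA QQ mulmx1 /mxtrace; apply: eq_bigr => i _.
by rewrite mul_diag_mx !mxE eqxx mulr1n.
Qed.

End FrobeniusProduct.

Section SingularValueDecomposition.
Variable R : rcfType.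

Definition reflmx n (w : 'cV[R]_n) : 'M[R]_n :=
  1%:M - (2 / frobdot w w) *: (w *m w^T).

(* [2 / 0 = 0] makes [reflmx 0] the identity, so no hypothesis on [w] is needed. *)
Lemma reflmx_orthogonal n (w : 'cV[R]_n) : (reflmx w)^T *m reflmx w = 1%:M.
Proof.
have sym : (reflmx w)^T = reflmx w.
  rewrite /reflmx [(_ - _)^T]linearB /= [(_ *: _)^T]linearZ /=.
  by rewrite trmx1 trmx_mul trmxK.
have [w0|wn0] := eqVneq (frobdot w w) 0.
  by rewrite sym /reflmx w0 invr0 mulr0 scale0r subr0; apply: mulmx1.
rewrite sym /reflmx mulmxBl !mulmxBr !mul1mx !mulmx1 -scalemxAl -scalemxAr.
rewrite -mulmxA (mulmxA w^T) trmx_mul_cV mul_scalar_mx -scalemxAr !scalerA.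
have -> : 2 / frobdot w w * (2 / frobdot w w * frobdot w w) =
    2 / frobdot w w + 2 / frobdot w w by field.
by rewrite scalerDl opprB addrK subrK.
Qed.

Lemma reflmx_swap n (u v : 'cV[R]_n) :
  frobdot u u = frobdot v v -> reflmx (u - v) *m v = u.
Proof.
move=> uv; set w := u - v.
have [w0|wn0] := eqVneq (frobdot w w) 0.
  have /eqP := frobdot_self_eq0 w0; rewrite subr_eq0 => /eqP ->.
  by rewrite /reflmx w0 invr0 mulr0 scale0r subr0 mul1mx.
have wv : w^T *m v = (- (frobdot w w / 2))%:M.
  rewrite trmx_mul_cV /w frobdotBr ![frobdot (u - v) _]frobdotC !frobdotBr.
  by rewrite (frobdotC u v) -uv; congr (_%:M); field.
rewrite /reflmx mulmxBl mul1mx -scalemxAl -mulmxA wv mul_mx_scalar scalerA.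
have -> : 2 / frobdot w w * - (frobdot w w / 2) = -1 by field.
by rewrite scaleN1r opprK /w addrC subrK.
Qed.

Lemma orthomx_col0 n (z : 'cV[R]_n.+1) : z^T *m z = 1%:M ->
  exists2 H : 'M[R]_n.+1, H^T *m H = 1%:M & H *m delta_mx 0 0 = z.
Proof.
move=> zz; exists (reflmx (z - delta_mx 0 0)); first exact: reflmx_orthogonal.
apply: reflmx_swap; rewrite !frobdot_cVE zz trmx_delta mul_delta_mx.
by rewrite !mxE.
Qed.

Lemma normalize_cV n (v : 'cV[R]_n) r : v^T *m v = (r ^+ 2)%:M -> r != 0 ->
  (r^-1 *: v)^T *m (r^-1 *: v) = 1%:M.
Proof.
move=> vv rn0; rewrite [(_ *: v)^T]linearZ /= -scalemxAl -scalemxAr vv.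
by rewrite scalerA scale_scalar_mx -expr2 exprVn mulVf ?expf_neq0.
Qed.

Lemma realsym_eigenvector n (S : 'M[R]_n) : S^T = S -> S != 0 ->
  exists mu, mu != 0 /\ exists2 z : 'cV[R]_n, z^T *m z = 1%:M & S *m z = mu *: z.
Proof.
move=> Ssym Sn0; pose SC := map_mx (real_complex R) S.
have SCsym : SC \is symmetricmx.
  by apply/is_hermitianmxP; rewrite expr0 scale1r map_mx_id // /SC map_trmx Ssym.
have SCreal : SC \is a mxOver Num.real.
  by apply/mxOverP => i j; rewrite mxE; apply/complex_realP; eexists.
have /orthomx_spectralP SCE := symmetric_normalmx SCsym SCreal.
have /mxOverP Dreal := hermitian_spectral_diag_real (realsym_hermsym SCsym SCreal).
move: SCE Dreal; set P := spectralmx SC; set D := spectral_diag SC => SCE Dreal.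
have Punit : P \in unitmx by apply: spectral_unit.
have [i Di] : exists i, D 0 i != 0.
  apply/existsP; apply: contraNT Sn0 => /existsPn D0.
  have {}D0 : D = 0 by apply/rowP => j; rewrite mxE; apply/eqP/negPn/D0.
  by rewrite -(map_mx_eq0 (real_complex R)) -/SC SCE D0 linear0 mulmx0 mul0mx.
have [mu Dmu] := complex_realP _ (Dreal 0 i).
have PiSC : row i P *m SC = D 0 i *: row i P.
  rewrite -row_mul {1}SCE !mulmxA mulmxV // mul1mx mul_diag_mx; apply/rowP => j.
  by rewrite !mxE.
have Pin0 : row i P != 0.
  apply/eqP => /(congr1 (mulmx^~ (invmx P))); rewrite -row_mul mulmxV // mul0mx.
  by rewrite row1 => /rowP/(_ i); rewrite !mxE => /eqP; rewrite !eqxx oner_eq0.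
have : eigenvalue S mu.
  have : eigenvalue SC (D 0 i) by apply/eigenvalueP; exists (row i P).
  rewrite Dmu eigenvalue_root_char -map_char_poly fmorph_root.
  by rewrite -eigenvalue_root_char.
case/eigenvalueP => v vS vn0; exists mu; split.
  by apply: contra Di; rewrite Dmu => /eqP ->.
have vv : v^T^T *m v^T = (Num.sqrt (frobdot v^T v^T) ^+ 2)%:M.
  by rewrite trmx_mul_cV sqr_sqrtr // frobdot_self_ge0.
exists ((Num.sqrt (frobdot v^T v^T))^-1 *: v^T).
  apply: normalize_cV vv _; rewrite sqrtr_eq0 -ltNge lt_def frobdot_self_ge0 andbT.
  apply: contra vn0 => /eqP/frobdot_self_eq0/(congr1 trmx).
  by rewrite trmxK trmx0 => ->.
rewrite -scalemxAr -Ssym -trmx_mul vS [(_ *: v)^T]linearZ /=.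
by rewrite scalerA mulrC -scalerA.
Qed.

Lemma singular_pair m n (V : 'M[R]_(m, n)) : V != 0 ->
  exists s (z : 'cV_n) (u : 'cV_m),
    [/\ 0 < s, z^T *m z = 1%:M, u^T *m u = 1%:M, V *m z = s *: u & V^T *m u = s *: z].
Proof.
move=> Vn0; have VVsym : (V^T *m V)^T = V^T *m V by rewrite trmx_mul trmxK.
have VVn0 : V^T *m V != 0.
  apply: contra Vn0 => /eqP VV0; apply/eqP/frobdot_self_eq0.
  by rewrite /frobdot VV0 mxtrace0.
have [mu [mun0 [z zz VVz]]] := realsym_eigenvector VVsym VVn0.
have Vz2 : (V *m z)^T *m (V *m z) = mu%:M.
  by rewrite trmx_mul -mulmxA (mulmxA V^T) VVz -scalemxAr zz scalemx1.
have mu_gt0 : 0 < mu.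
  have := frobdot_self_ge0 (V *m z); rewrite frobdot_cVE Vz2 mxE eqxx mulr1n.
  by rewrite lt_def mun0.
have s_gt0 : 0 < Num.sqrt mu by rewrite sqrtr_gt0.
exists (Num.sqrt mu), z, ((Num.sqrt mu)^-1 *: (V *m z)); split => //.
- by apply: normalize_cV; rewrite ?sqr_sqrtr ?ltW ?gt_eqF.
- by rewrite scalerA divff ?gt_eqF // scale1r.
- rewrite -scalemxAr mulmxA VVz scalerA; congr (_ *: _).
  by rewrite -{2}(sqr_sqrtr (ltW mu_gt0)) expr2 mulKf ?gt_eqF.
Qed.

Lemma block_of_delta00 m n (B : 'M[R]_(1 + m, 1 + n)) s :
  B *m delta_mx 0 0 = s *: (delta_mx 0 0 : 'cV_(1 + m)) ->
  delta_mx 0 0 *m B = s *: (delta_mx 0 0 : 'rV_(1 + n)) ->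
  B = block_mx s%:M 0 0 (drsubmx B).
Proof.
rewrite -colE -rowE => /colP col0B /rowP row0B.
have l0 k : lshift k (0 : 'I_1) = 0 by apply: val_inj.
have r0 k (j : 'I_k) : (rshift 1 j == 0) = false by [].
rewrite -[B in LHS]submxK; congr block_mx; apply/matrixP => i j; rewrite !ord1 !mxE.
- by have := row0B 0; rewrite !l0 !mxE !eqxx mulr1.
- by have := row0B (rshift 1 j); rewrite l0 !mxE r0 mulr0.
- by have := col0B (rshift 1 i); rewrite l0 !mxE r0 mulr0.
Qed.

Lemma orthomx_mul m n k (H : 'M[R]_(m, n)) (U : 'M[R]_(n, k)) :
  H^T *m H = 1%:M -> U^T *m U = 1%:M -> (H *m U)^T *m (H *m U) = 1%:M.
Proof. by move=> HH UU; rewrite trmx_mul mulmxA -(mulmxA U^T) HH mulmx1. Qed.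

Lemma svd_step m n (V : 'M[R]_(1 + m, 1 + n)) :
  exists (Hu : 'M_(1 + m)) (Hz : 'M_(1 + n)) (s : R) (V' : 'M_(m, n)),
    [/\ Hu^T *m Hu = 1%:M, Hz^T *m Hz = 1%:M, 0 <= s
      & V = Hu *m block_mx s%:M 0 0 V' *m Hz^T].
Proof.
have [->|Vn0] := eqVneq V 0.
  exists 1%:M, 1%:M, 0, 0.
  by split; rewrite ?trmx1 ?mulmx1 ?(raddf0 scalar_mx) ?block_mx0 ?mulmx0.
have [s [z [u [s_gt0 zz uu Vz Vu]]]] := singular_pair Vn0.
have [Hu HuHu Hue] := orthomx_col0 uu.
have [Hz HzHz Hze] := orthomx_col0 zz.
pose B : 'M_(1 + m, 1 + n) := Hu^T *m V *m Hz.
have Be : B *m delta_mx 0 0 = s *: (delta_mx 0 0 : 'cV_(1 + m)).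
  by rewrite -mulmxA Hze -mulmxA Vz -scalemxAr -Hue mulmxA HuHu mul1mx.
have eB : delta_mx 0 0 *m B = s *: (delta_mx 0 0 : 'rV_(1 + n)).
  apply: trmx_inj; rewrite trmx_mul trmx_delta !trmx_mul trmxK -!mulmxA Hue Vu.
  by rewrite -scalemxAr -Hze mulmxA HzHz mul1mx [(_ *: _)^T]linearZ /= trmx_delta.
exists Hu, Hz, s, (drsubmx B); split; rewrite ?ltW //.
rewrite -(block_of_delta00 Be eB) /B !mulmxA (mulmx1C HuHu) mul1mx.
by rewrite -mulmxA (mulmx1C HzHz) mulmx1.
Qed.

Lemma block1_tr_mul p q r (A : 'M[R]_(p, q)) (B : 'M[R]_(p, r)) :
  (block_mx 1%:M 0 0 A)^T *m block_mx (1%:M : 'M_1) 0 0 B =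
  block_mx 1%:M 0 0 (A^T *m B).
Proof.
rewrite tr_block_mx !trmx0 trmx1 mulmx_block !mulmx0 !mul0mx !addr0 !add0r.
by rewrite mulmx1.
Qed.

Lemma block1_diag_mul p q r (U : 'M[R]_(p, r)) (Z : 'M[R]_(q, r)) a
    (s : 'rV[R]_r) :
  block_mx (1%:M : 'M_1) 0 0 U *m diag_mx (row_mx a%:M s)
    *m (block_mx 1%:M 0 0 Z)^T =
  block_mx a%:M 0 0 (U *m diag_mx s *m Z^T).
Proof.
rewrite diag_mx_row tr_block_mx !trmx0 trmx1 !mulmx_block.
rewrite !mulmx0 !mul0mx !addr0 !add0r mul1mx mulmx1 !mul0mx.
by congr block_mx; apply/matrixP => i j; rewrite !ord1 !mxE.
Qed.

(* [k] is abstracted because [minn m.+1 n.+1] is not convertible to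
   [(minn m n).+1]. *)
Lemma svd_exists_gen m n k : k = minn m n -> forall V : 'M[R]_(m, n),
  exists (U : 'M_(m, k)) (s : 'rV_k) (Z : 'M_(n, k)),
    [/\ U^T *m U = 1%:M, Z^T *m Z = 1%:M, forall i, 0 <= s 0 i
      & V = U *m diag_mx s *m Z^T].
Proof.
elim: m n k => [|m IH] n k.
  rewrite min0n => -> V; exists 0, 0, 0.
  by split => [||[] //|]; apply/matrixP => -[].
case: n => [|n].
  rewrite minn0 => -> V; exists 0, 0, 0.
  by split => [||[] //|]; apply/matrixP => ? [].
rewrite minnSS => -> V; have [Hu [Hz [s [V' [HuHu HzHz s_ge0 ->]]]]] := svd_step V.
have [U [s' [Z [UU ZZ s'_ge0 ->]]]] := IH n _ erefl V'.
exists (Hu *m block_mx 1%:M 0 0 U), (row_mx s%:M s'), (Hz *m block_mx 1%:M 0 0 Z).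
split.
- by apply: orthomx_mul; rewrite // block1_tr_mul UU -scalar_mx_block.
- by apply: orthomx_mul; rewrite // block1_tr_mul ZZ -scalar_mx_block.
- by move=> i; rewrite mxE; case: splitP => j _; rewrite ?ord1 ?mxE ?mulr1n.
- by rewrite -block1_diag_mul trmx_mul !mulmxA.
Qed.

End SingularValueDecomposition.

Section NuclearNorm.
Variable R : realType.

Lemma frob2E m n (A : 'M[R]_(m, n)) : frob2 A = frobdot A A.
Proof. by rewrite frobdotE; do 2!apply: eq_bigr => ? _; rewrite expr2. Qed.

Lemma svd_exists m n (W : 'M[R]_(m, n)) : exists U s V, is_svd W U s V.
Proof.
by have [U [s [V []]]] := svd_exists_gen (erefl (minn m n)) W; exists U, s, V.
Qed.

Lemma sing_vals_svd m n (W : 'M[R]_(m, n)) : exists U V, is_svd W U (sing_vals W) V.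
Proof.
apply: (epsilon_spec (inhabits 0) (fun s => exists U V, is_svd W U s V)).
by have [U [s [V ?]]] := svd_exists W; exists s, U, V.
Qed.

Lemma nucnorm_ge0 m n (W : 'M[R]_(m, n)) : 0 <= nucnorm W.
Proof. by have [U [V [_ _ s_ge0 _]]] := sing_vals_svd W; apply: sumr_ge0. Qed.

Lemma frobdot_le_nucnorm m n k (X : 'M[R]_(m, k)) (Y : 'M[R]_(n, k))
    (g : 'rV[R]_k) (W : 'M[R]_(m, n)) :
  X^T *m X = 1%:M -> Y^T *m Y = 1%:M -> (forall i, 0 <= g 0 i <= 1) ->
  frobdot (X *m diag_mx g *m Y^T) W <= nucnorm W.
Proof.
move=> XX YY g01; have [U [V [UU VV s_ge0 WE]]] := sing_vals_svd W.
by rewrite {1}WE; apply: frobdot_diag_le_sum.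
Qed.

Lemma nucnorm_svd m n (W : 'M[R]_(m, n)) U s V :
  is_svd W U s V -> nucnorm W = \sum_i s 0 i.
Proof.
move=> [UU VV s_ge0 WE]; have [U' [V' [UU' VV' s'_ge0 WE']]] := sing_vals_svd W.
have one01 i : 0 <= (const_mx 1 : 'rV[R]_(minn m n)) 0 i <= 1.
  by rewrite mxE ler01 lexx.
have sum_sv (X : 'M[R]_(m, minn m n)) (Y : 'M[R]_(n, minn m n))
    (t : 'rV[R]_(minn m n)) :
    X^T *m X = 1%:M -> Y^T *m Y = 1%:M ->
    \sum_i t 0 i = frobdot (X *m diag_mx (const_mx 1) *m Y^T) (X *m diag_mx t *m Y^T).
  move=> XX YY; rewrite frobdot_diag //.
  by apply: eq_bigr => i _; rewrite mxE mul1r.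
apply/le_anti/andP; split.
  by rewrite /nucnorm (sum_sv U' V') // -WE' WE frobdot_diag_le_sum.
by rewrite (sum_sv U V) // -WE frobdot_le_nucnorm.
Qed.

Lemma Phi_dual_certificate m n (M W G : 'M[R]_(m, n)) :
  W + ((minn m n)%:R^-1 * nucnorm W) *: G = 2 *: M ->
  frobdot G W = nucnorm W -> (forall V, frobdot G V <= nucnorm V) ->
  forall V, Phi M W + 4^-1 * frob2 (V - W) <= Phi M V.
Proof.
move=> WGM GW G_le V; rewrite /Phi; set a := nucnorm W in WGM GW *.
set lam := _ * a in WGM; set c := (4 * (minn m n)%:R)^-1.
have eW : W - 2 *: M = 0 - lam *: G by rewrite -WGM opprD addrA subrr.
have eV : V - 2 *: M = (V - W) - lam *: G by rewrite -WGM opprD addrA.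
have lamE : lam = 4 * c * a.
  by rewrite /lam /c invfM !mulrA mulfV ?mul1r // pnatr_eq0.
have c_ge0 : 0 <= c by rewrite invr_ge0 mulr_ge0 ?ler0n.
have a_ge0 : 0 <= a := nucnorm_ge0 W.
have := G_le V; rewrite eW eV !frob2E !frobdot_subZ !frobdot0r (frobdotBr G) GW.
rewrite lamE; move: (nucnorm V) (frobdot G V) (frobdot (V - W) (V - W)).
move: (frobdot G G) => g x t d t_le.
(* Phi V - Phi W - |V - W|^2 / 4 = c (x - a)^2 + 2 c a (x - t). *)
have : 0 <= c * (x - a) ^+ 2 by rewrite mulr_ge0 ?sqr_ge0.
have : 0 <= c * a * (x - t) by rewrite !mulr_ge0 ?subr_ge0.
nra.
Qed.

End NuclearNorm.

Section Weights.
Variable R : realType.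

(* Take for lambda the maximum of 2 \sum_(i in S) sigma_i / (k + #|S|) over index
   sets S.  Comparing with S = [set i | 2 sigma_i >= lambda], and using equality at
   the maximiser, gives \sum_i max(0, 2 sigma_i - lambda) = k lambda. *)
Lemma wfix_exists k (sigma : 'rV[R]_k) :
  (forall i, 0 <= sigma 0 i) -> exists w, wfix sigma w.
Proof.
case: k sigma => [|k] sigma s_ge0; first by exists 0; split => -[].
pose ratio (S : {set 'I_k.+1}) := 2 * (\sum_(i in S) sigma 0 i) / (k.+1 + #|S|)%:R.
have [S0 _ S0_max] := @arg_maxP _ _ _ set0 xpredT ratio erefl.
have den_gt0 (S : {set 'I_k.+1}) : 0 < (k.+1 + #|S|)%:R :> R by rewrite ltr0n.
have le_ratio (S : {set 'I_k.+1}) :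
    2 * \sum_(i in S) sigma 0 i <= ratio S0 * (k.+1 + #|S|)%:R.
  by rewrite -ler_pdivrMr //; apply: S0_max.
have eq_ratio : 2 * \sum_(i in S0) sigma 0 i = ratio S0 * (k.+1 + #|S0|)%:R.
  by rewrite divfK ?gt_eqF.
move: (ratio S0) le_ratio eq_ratio => lam le_lam eq_lam; clear S0_max ratio.
have sum_gap (S : {set 'I_k.+1}) : \sum_(i in S) (2 * sigma 0 i - lam) =
    2 * \sum_(i in S) sigma 0 i - #|S|%:R * lam.
  by rewrite sumrB -mulr_sumr sumr_const (mulr_natl lam).
have [w wE] : {w : 'rV_k.+1 | forall i, w 0 i = Num.max 0 (2 * sigma 0 i - lam)}.
  by exists (\row_i Num.max 0 (2 * sigma 0 i - lam)) => i; rewrite mxE.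
have sum_w : \sum_j w 0 j = k.+1%:R * lam.
  apply/le_anti/andP; split.
    have := le_lam [set i | 0 <= 2 * sigma 0 i - lam].
    have -> : \sum_j w 0 j = \sum_(i in [set i | 0 <= 2 * sigma 0 i - lam])
                                (2 * sigma 0 i - lam).
      by rewrite [RHS]big_mkcond; apply: eq_bigr => i _; rewrite wE inE maxEle.
    by rewrite sum_gap lerBlDr -mulrDl -natrD (mulrC _ lam).
  apply: (@le_trans _ _ (\sum_(i in S0) (2 * sigma 0 i - lam))).
    by rewrite sum_gap eq_lam natrD mulrDr (mulrC #|S0|%:R) addrK mulrC.
  rewrite big_mkcond; apply: ler_sum => i _.
  by rewrite wE; case: (i \in S0); rewrite le_max lexx ?orbT.
exists w; split => i; first by rewrite wE le_max lexx.
by rewrite sum_w mulKf ?pnatr_eq0 // wE.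
Qed.

Lemma wfix_unique k (sigma w1 w2 : 'rV[R]_k) :
  wfix sigma w1 -> wfix sigma w2 -> w1 = w2.
Proof.
move=> w1_fix w2_fix.
have lamE : k%:R^-1 * \sum_j w1 0 j = k%:R^-1 * \sum_j w2 0 j.
  wlog le12 : w1 w2 w1_fix w2_fix /
      k%:R^-1 * \sum_j w1 0 j <= k%:R^-1 * \sum_j w2 0 j.
    move=> sym; case: (leP (k%:R^-1 * \sum_j w1 0 j) (k%:R^-1 * \sum_j w2 0 j)).
      exact: sym.
    by move/ltW/(sym _ _ w2_fix w1_fix).
  apply/le_anti; rewrite le12 ler_wpM2l ?invr_ge0 //; apply: ler_sum => i _.
  by case: w1_fix w2_fix => _ -> [_ ->]; rewrite le_max2 // lerB.
by case: w1_fix w2_fix => _ w1E [_ w2E]; apply/rowP => i; rewrite w1E w2E lamE.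
Qed.

Lemma wfix_dual_weights k (sigma w : 'rV[R]_k) :
  (forall i, 0 <= sigma 0 i) -> wfix sigma w ->
  exists g : 'rV[R]_k,
    [/\ forall i, 0 <= g 0 i <= 1, w + (k%:R^-1 * \sum_j w 0 j) *: g = 2 *: sigma
       & forall i, g 0 i * w 0 i = w 0 i].
Proof.
move=> s_ge0 [w_ge0 wE]; set lam := _ * _ in wE *.
have lam_ge0 : 0 <= lam by rewrite mulr_ge0 ?invr_ge0 ?sumr_ge0.
have [lam0|lam_gt0] := eqVneq lam 0.
  exists (const_mx 1); split => [i||i]; rewrite ?mxE ?ler01 ?lexx ?mul1r //.
  rewrite lam0 scale0r addr0; apply/rowP => i.
  by rewrite wE lam0 !mxE subr0 max_r ?mulr_ge0.
have {}lam_gt0 : 0 < lam by rewrite lt_def lam_gt0.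
exists (\row_i (Num.min (2 * sigma 0 i) lam / lam)); split => [i||i]; rewrite ?mxE.
- have min_ge0 : 0 <= Num.min (2 * sigma 0 i) lam.
    by rewrite le_min mulr_ge0 ?s_ge0.
  by rewrite divr_ge0 ?(ltW lam_gt0) //= ler_pdivrMr // mul1r ge_min lexx orbT.
- apply/rowP => i; rewrite !mxE mulrC divfK ?gt_eqF // wE.
  case: (leP (2 * sigma 0 i) lam) => h.
    by rewrite max_l ?add0r // subr_le0.
  by rewrite max_r ?subrK // subr_ge0 ltW.
- rewrite wE; case: (leP (2 * sigma 0 i) lam) => h.
    by rewrite max_l ?mulr0 // subr_le0.
  by rewrite divff ?gt_eqF // mul1r.
Qed.

End Weights.

Lemma Phi_wfix_gap (R : realType) m n (M : 'M[R]_(m, n))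
    (P : 'M[R]_(m, minn m n)) (Q : 'M[R]_(n, minn m n))
    (sigma w : 'rV[R]_(minn m n)) :
  P^T *m P = 1%:M -> Q^T *m Q = 1%:M -> (forall i, 0 <= sigma 0 i) ->
  M = P *m diag_mx sigma *m Q^T -> wfix sigma w ->
  forall V, Phi M (P *m diag_mx w *m Q^T)
              + 4^-1 * frob2 (V - P *m diag_mx w *m Q^T) <= Phi M V.
Proof.
move=> PP QQ s_ge0 -> w_fix; have [w_ge0 _] := w_fix.
have [g [g01 wg gw]] := wfix_dual_weights s_ge0 w_fix.
have nucW : nucnorm (P *m diag_mx w *m Q^T) = \sum_j w 0 j.
  by apply: (nucnorm_svd (U := P) (V := Q)); split.
apply: (Phi_dual_certificate (G := P *m diag_mx g *m Q^T)).
- have PDQ_lin a b c : P *m diag_mx a *m Q^T + c *: (P *m diag_mx b *m Q^T) =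
      P *m diag_mx (a + c *: b) *m Q^T.
    rewrite [diag_mx (_ + _)]linearD /= [diag_mx (_ *: b)]linearZ /=.
    by rewrite mulmxDr mulmxDl -scalemxAr -scalemxAl.
  by rewrite nucW PDQ_lin wg [diag_mx _]linearZ /= -scalemxAr -scalemxAl.
- by rewrite nucW frobdot_diag //; apply: eq_bigr => i _; apply: gw.
- by move=> V; apply: frobdot_le_nucnorm.
Qed.

Unset Implicit Arguments.

Theorem lemmaB6 (R : realType) (m n : nat) (Mstar : 'M[R]_(m, n))
  (P : 'M[R]_(m, minn m n)) (Q : 'M[R]_(n, minn m n))
  (sigma : 'rV[R]_(minn m n))
  (hP : P^T *m P = 1%:M) (hQ : Q^T *m Q = 1%:M)
  (hsigma : forall i, 0 <= sigma 0 i)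
  (hM : Mstar = P *m diag_mx sigma *m Q^T) :
  (exists! W : 'M[R]_(m, n), forall V, Phi Mstar W <= Phi Mstar V) /\
  (exists! w : 'rV[R]_(minn m n), wfix sigma w) /\
  (forall w : 'rV[R]_(minn m n), wfix sigma w ->
     forall V, Phi Mstar (P *m diag_mx w *m Q^T) <= Phi Mstar V).
Proof.
have gap := Phi_wfix_gap hP hQ hsigma hM.
have Phi_min w :
    wfix sigma w -> forall V, Phi Mstar (P *m diag_mx w *m Q^T) <= Phi Mstar V.
  move=> w_fix V; apply: le_trans (gap w w_fix V) => /=.
  by rewrite lerDl mulr_ge0 ?invr_ge0 // frob2E frobdot_self_ge0.
have [w w_fix] := wfix_exists hsigma.
split; last by split => //; exists w; split => // w'; apply: wfix_unique.
exists (P *m diag_mx w *m Q^T); split => [|W W_min]; first exact: Phi_min.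
have := le_trans (gap w w_fix W) (W_min (P *m diag_mx w *m Q^T)).
rewrite gerDl pmulr_rle0 ?invr_gt0 // frob2E => d_le0.
apply/eqP; rewrite eq_sym -subr_eq0; apply/eqP/frobdot_self_eq0/le_anti.
by rewrite d_le0 frobdot_self_ge0.
Qed.
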